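(* Let $n\ge1$, $\rho\in\mathbb{R}$ with $n+2-n\rho\neq 0$, and let $H_n$ be the $(2n+1)$-dimensional Heisenberg group with Lie algebra $\mathfrak{h}_n$ spanned by $e_1,\dots,e_{2n+1}$, whose only nonzero brackets are $[e_i,e_{n+i}]=e_{2n+1}$ ($1\le i\le n$). Let $g_0$ be a left-invariant metric, diagonal in this basis, with $g_I(0)=g_0(e_I,e_I)$, satisfying $g_{2n+1}(0)=g_i(0)g_{n+i}(0)$ for all $1\le i\le n$. Let $g(t)$ be the diagonal left-invariant metric with $g_j(t)=g_j(0)(1+bt)^{\frac{1-n\rho}{n+2-n\rho}}$ ($1\le j\le 2n$), $g_{2n+1}(t)=g_{2n+1}(0)(1+bt)^{\frac{n+n\rho}{n\rho-n-2}}$, $b=(n+2-n\rho)\frac{g_{2n+1}(0)}{g_1(0)g_{1+n}(0)}$, which is the solution of the Ricci–Bourguignon flow $\partial_t g=-2\mathrm{Ric}+2\rho Rg$ starting at $g_0$. Then $(H_n,g_0)$ is of Heisenberg type, but the Heisenberg type property is not preserved along $g(t)$: for $t\neq 0$ (with $1+bt>0$), $(\mathfrak{h}_n,g(t))$ is not of Heisenberg type.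
   Context: For a 2-step nilpotent Lie algebra $\mathcal{N}$ with inner product $\langle\cdot,\cdot\rangle$, let $\mathcal{Z}$ be its center and $\mathcal{V}$ the orthogonal complement of $\mathcal{Z}$. For $Z\in\mathcal{Z}$ define the skew-symmetric map $j(Z):\mathcal{V}\to\mathcal{V}$ by $\langle j(Z)X,Y\rangle=\langle Z,[X,Y]\rangle$ for all $X,Y\in\mathcal{V}$. $(\mathcal{N},\langle\cdot,\cdot\rangle)$ is of Heisenberg type if $j(Z)^2=-|Z|^2\,\mathrm{Id}$ for all $Z\in\mathcal{Z}$. Here $\mathcal{Z}=\mathrm{span}\{e_{2n+1}\}$ and, for diagonal metrics, $\mathcal{V}=\mathrm{span}\{e_1,\dots,e_{2n}\}$; $j$ and norms are taken with respect to $g(t)$ at time $t$. *)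

From mathcomp Require Import all_boot all_order all_algebra.
From mathcomp Require Import all_classical all_reals all_analysis.
Unset Printing Implicit Defensive.
Import Order.TTheory GRing.Theory Num.Theory.
Local Open Scope ring_scope.

(* The Heisenberg algebra h_n = R^(2n+1), coordinates indexed 0 .. 2n
   (paper's e_{k+1} is our index k). *)
Notation hdim n := (n.*2).+1.
Notation hvec R n := 'rV[R]_(hdim n).

Definition hco {R : nzRingType} {n : nat} (X : hvec R n) (k : nat) : R :=
  X 0 (inord k).

Definition hbas {R : nzRingType} (n k : nat) : hvec R n := delta_mx 0 (inord k).

(* Lie bracket of h_n: the bilinear extension of
   [e_i, e_{n+i}] = - [e_{n+i}, e_i] = e_{2n}  (0 <= i < n), all others 0. *)
Definition heis_br {R : nzRingType} (n : nat) (X Y : hvec R n) : hvec R n :=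
  (\sum_(i < n) (hco X i * hco Y (n + i) - hco X (n + i) * hco Y i))
    *: hbas n n.*2.

Definition diag_ip {R : nzRingType} (n : nat) (g : 'I_(hdim n) -> R)
  (X Y : hvec R n) : R := \sum_(k < hdim n) g k * X 0 k * Y 0 k.

Definition in_center {R : nzRingType} {n : nat}
  (br : hvec R n -> hvec R n -> hvec R n) (Z : hvec R n) : Prop :=
  forall X, br Z X = 0.

Definition in_Vcompl {R : nzRingType} {n : nat}
  (ip : hvec R n -> hvec R n -> R) (br : hvec R n -> hvec R n -> hvec R n)
  (X : hvec R n) : Prop :=
  forall Z, in_center br Z -> ip X Z = 0.

(* j(Z) : V -> V is the (unique, by nondegeneracy of ip on V) map with
   <j(Z) X, Y> = <Z, [X,Y]> for X, Y in V.  Heisenberg type: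
   j(Z)^2 = -|Z|^2 Id on V for every Z in the center. *)
Definition is_jmap {R : nzRingType} {n : nat}
  (ip : hvec R n -> hvec R n -> R) (br : hvec R n -> hvec R n -> hvec R n)
  (Z : hvec R n) (J : hvec R n -> hvec R n) : Prop :=
  (forall X, in_Vcompl ip br X -> in_Vcompl ip br (J X)) /\
  (forall X Y, in_Vcompl ip br X -> in_Vcompl ip br Y ->
     ip (J X) Y = ip Z (br X Y)).

Definition heisenberg_type {R : nzRingType} {n : nat}
  (ip : hvec R n -> hvec R n -> R) (br : hvec R n -> hvec R n -> hvec R n)
  : Prop :=
  forall Z, in_center br Z ->
    exists J, is_jmap ip br Z J /\
      (forall X, in_Vcompl ip br X -> J (J X) = - (ip Z Z) *: X).

Definition rb_b {R : realType} (n : nat) (rho : R) (g0 : 'I_(hdim n) -> R) : R :=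
  (n%:R + 2 - n%:R * rho) * g0 (inord n.*2) / (g0 (inord 0) * g0 (inord n)).

Definition rb_sol {R : realType} (n : nat) (rho : R) (g0 : 'I_(hdim n) -> R)
  (t : R) (k : 'I_(hdim n)) : R :=
  let s := 1 + rb_b n rho g0 * t in
  if (k < n.*2)%N
  then g0 k * powR s ((1 - n%:R * rho) / (n%:R + 2 - n%:R * rho))
  else g0 k * powR s ((n%:R + n%:R * rho) / (n%:R * rho - n%:R - 2)).

From mathcomp Require Import all_boot all_order all_algebra.
From mathcomp Require Import all_classical all_reals all_analysis.
From mathcomp Require Import zify ring.
Import Order.TTheory GRing.Theory Num.Theory.
Local Open Scope ring_scope.

(* For a diagonal metric g with g_2n <> 0, the center of h_n is spanned by
   e_2n and V by e_0, ..., e_(2n-1).  If u is the e_(n+i)-coordinate of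
   j(e_2n) e_i, the defining identity of j gives g_(n+i) u = g_2n, and pairing
   j(e_2n)^2 e_i = -g_2n e_i with e_i gives g_i = u; so Heisenberg type forces
   g_2n = g_i g_(n+i).  Conversely, under these relations the map
   j(z e_2n) e_i = (z g_2n / g_(n+i)) e_(n+i),
   j(z e_2n) e_(n+i) = -(z g_2n / g_i) e_i
   squares to -g_2n z^2 = -|z e_2n|^2.  Along the Ricci-Bourguignon solution
   the exponents a of g_j (j < 2n) and c of g_2n satisfy 2a = c + 1, so
   g_0(t) g_n(t) = (1 + bt) g_2n(t) and the relation fails once bt <> 0. *)

Section HeisenbergBracket.
Context {R : nzRingType} {n : nat}.

Lemma hco_hbas k j : (k < hdim n)%N -> (j < hdim n)%N ->
  hco (hbas n k : hvec R n) j = (k == j)%:R.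
Proof. by move=> hk hj; rewrite /hco /hbas mxE eqxx /= -val_eqE /= !inordK // eq_sym. Qed.

Lemma hcoZ a (X : hvec R n) k : hco (a *: X) k = a * hco X k.
Proof. by rewrite /hco mxE. Qed.

Lemma hco0 k : hco (0 : hvec R n) k = 0.
Proof. by rewrite /hco mxE. Qed.

Lemma hvecP (X Y : hvec R n) :
  (forall i, (i < n)%N -> hco X i = hco Y i /\ hco X (n + i) = hco Y (n + i)) ->
  hco X n.*2 = hco Y n.*2 -> X = Y.
Proof.
move=> XYlo XYtop; apply/rowP => k.
have hcoE (W : hvec R n) : W 0 k = hco W k by rewrite /hco inord_val.
rewrite !hcoE; have := ltn_ord k; move: (nat_of_ord k) => m mS.
have [mn | nm] := ltnP m n; first exact: (XYlo m mn).1.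
have [m2n | ] := ltnP m n.*2.
  have mn' : (m - n < n)%N by move: m2n; rewrite -addnn; lia.
  by have := (XYlo _ mn').2; rewrite subnKC.
move=> m_ge; suff -> : m = n.*2 by [].
by apply/eqP; rewrite eqn_leq m_ge andbT -ltnS.
Qed.

Lemma sum_ord_delta (F : nat -> R) k : (k < n)%N ->
  \sum_(i < n) F i * (k == i)%:R = F k.
Proof.
move=> hk; rewrite (bigD1 (Ordinal hk)) //= eqxx mulr1 big1 ?addr0 // => i ik.
rewrite (_ : (k == i) = false) ?mulr0 //.
by apply: contraNF ik => /eqP ki; apply/eqP/val_inj.
Qed.

Lemma sum_hdim_split (F : nat -> R) :
  \sum_(k < hdim n) F k = \sum_(i < n) (F i + F (n + i)) + F n.*2.
Proof.
rewrite -(big_mkord xpredT F) big_nat_recr //= -addnn.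
rewrite (@big_cat_nat _ _ _ n) ?leq_addr //= big_split /=.
congr (_ + _ + _); first by rewrite big_mkord.
rewrite -{1}(add0n n) big_addn addnK big_mkord.
by apply: eq_bigr => i _; rewrite addnC.
Qed.

Lemma heis_br_hbas_shift (X : hvec R n) k : (k < n)%N ->
  heis_br n X (hbas n (n + k)) = hco X k *: hbas n n.*2.
Proof.
move=> hk; rewrite /heis_br -(sum_ord_delta (hco X) k hk); congr (_ *: _).
apply: eq_bigr => i _; have hi := ltn_ord i.
rewrite !hco_hbas; try (rewrite -addnn; lia).
by rewrite eqn_add2l (_ : (n + k == i) = false) ?mulr0 ?subr0 //; lia.
Qed.

Lemma heis_br_hbas (X : hvec R n) k : (k < n)%N ->
  heis_br n X (hbas n k) = - hco X (n + k) *: hbas n n.*2.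
Proof.
move=> hk; rewrite /heis_br -(sum_ord_delta (fun i => hco X (n + i)) k hk) -sumrN.
congr (_ *: _); apply: eq_bigr => i _; have hi := ltn_ord i.
rewrite !hco_hbas; try (rewrite -addnn; lia).
by rewrite (_ : (k == n + i) = false) ?mulr0 ?sub0r //; lia.
Qed.

Lemma in_center_hbas_top : in_center (heis_br n) (hbas n n.*2 : hvec R n).
Proof.
move=> X; rewrite /heis_br big1 ?scale0r // => i _; have hi := ltn_ord i.
rewrite !hco_hbas; try (rewrite -addnn; lia).
have [-> ->] : (n.*2 == i) = false /\ (n.*2 == n + i) = false.
  by split; apply/negbTE; rewrite -addnn; lia.
by rewrite !mul0r subr0.
Qed.

Lemma center_hco {Z : hvec R n} {k : nat} :
  in_center (heis_br n) Z -> (k < n.*2)%N -> hco Z k = 0.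
Proof.
move=> hZ hk; have top_coord v : hco (v *: hbas n n.*2 : hvec R n) n.*2 = v.
  by rewrite hcoZ hco_hbas // eqxx mulr1.
have [kn | nk] := ltnP k n.
  have := hZ (hbas n (n + k)); rewrite heis_br_hbas_shift //.
  by move/(congr1 (hco^~ n.*2)); rewrite top_coord hco0.
have kn' : (k - n < n)%N by move: hk; rewrite -addnn; lia.
have := hZ (hbas n (k - n)); rewrite heis_br_hbas // subnKC //.
by move/(congr1 (hco^~ n.*2)); rewrite top_coord hco0 => /eqP; rewrite oppr_eq0 => /eqP.
Qed.

End HeisenbergBracket.

Section DiagonalMetric.
Context {R : fieldType} {n : nat} {g : 'I_(hdim n) -> R}.
Local Notation ip := (diag_ip n g).
Local Notation br := (heis_br n).
Local Notation g_top := (g (inord n.*2)).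

Lemma diag_ipC (X Y : hvec R n) : ip X Y = ip Y X.
Proof. by apply: eq_bigr => k _; rewrite mulrAC. Qed.

Lemma diag_ipZr a (X Y : hvec R n) : ip X (a *: Y) = a * ip X Y.
Proof. by rewrite /diag_ip mulr_sumr; apply: eq_bigr => k _; rewrite mxE; ring. Qed.

Lemma diag_ip_hbasr (X : hvec R n) j : ip X (hbas n j) = g (inord j) * hco X j.
Proof.
rewrite /diag_ip (bigD1 (inord j)) //= big1 ?addr0.
  by rewrite /hbas mxE !eqxx mulr1.
by move=> k hk; rewrite /hbas mxE eqxx /= (negbTE hk) mulr0.
Qed.

Lemma diag_ip_split (X Y : hvec R n) : ip X Y =
  \sum_(i < n) (g (inord i) * hco X i * hco Y i
               + g (inord (n + i)) * hco X (n + i) * hco Y (n + i))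
  + g_top * hco X n.*2 * hco Y n.*2.
Proof.
rewrite -(@sum_hdim_split _ n (fun m => g (inord m) * hco X m * hco Y m)).
by apply: eq_bigr => k _; rewrite /hco inord_val.
Qed.

Lemma diag_ip_center_r (X Z : hvec R n) :
  in_center br Z -> ip X Z = g_top * hco X n.*2 * hco Z n.*2.
Proof.
move=> hZ; rewrite diag_ip_split big1 ?add0r // => i _; have hi := ltn_ord i.
by rewrite !(center_hco hZ) ?mulr0 ?addr0 //; rewrite -addnn; lia.
Qed.

Lemma in_Vcompl_hco_top (X : hvec R n) :
  g_top != 0 -> in_Vcompl ip br X -> hco X n.*2 = 0.
Proof.
move=> g_top_neq0 /(_ _ in_center_hbas_top) /eqP.
by rewrite diag_ip_hbasr mulf_eq0 (negbTE g_top_neq0) => /eqP.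
Qed.

Lemma in_Vcompl_hbas {k : nat} : (k < n.*2)%N -> in_Vcompl ip br (hbas n k).
Proof. by move=> hk Z hZ; rewrite diag_ipC diag_ip_hbasr (center_hco hZ) ?mulr0. Qed.

Lemma diag_ip_heisenberg_type_rel (i : 'I_n) : g_top != 0 ->
  heisenberg_type ip br -> g_top = g (inord i) * g (inord (n + i)).
Proof.
move=> g_top_neq0 /(_ _ in_center_hbas_top) [J [[JV Jip] JJ]].
have hi := ltn_ord i.
have [hi2 hni2] : (i < n.*2)%N /\ (n + i < n.*2)%N by rewrite -addnn; lia.
have Vi := in_Vcompl_hbas hi2; have Vni := in_Vcompl_hbas hni2.
have := Jip _ _ Vi Vni; rewrite heis_br_hbas_shift // diag_ipZr !diag_ip_hbasr.
rewrite !hco_hbas ?eqxx ?mulr1 ?mul1r; try (rewrite -addnn; lia).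
have := Jip _ _ (JV _ Vi) Vi; rewrite heis_br_hbas // (JJ _ Vi) diag_ipC.
rewrite !diag_ipZr !diag_ip_hbasr !hco_hbas ?eqxx ?mulr1; try (rewrite -addnn; lia).
set u := hco (J (hbas n i)) (n + i) => e2 e1.
suff -> : g (inord i) = u by rewrite mulrC e1.
by apply: (mulfI g_top_neq0); apply: oppr_inj; rewrite -mulNr e2 mulrC mulrN.
Qed.

Definition diag_jmap (c : R) (X : hvec R n) : hvec R n :=
  \row_(k < hdim n) if (k < n)%N then - c * hco X (n + k) / g k
                    else if (k < n.*2)%N then c * hco X (k - n) / g k else 0.

Lemma hco_diag_jmap_lo c X i : (i < n)%N ->
  hco (diag_jmap c X) i = - c * hco X (n + i) / g (inord i).
Proof. by move=> hi; rewrite /hco mxE inordK ?hi //; rewrite -addnn; lia. Qed.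

Lemma hco_diag_jmap_hi c X i : (i < n)%N ->
  hco (diag_jmap c X) (n + i) = c * hco X i / g (inord (n + i)).
Proof.
move=> hi; rewrite /hco mxE inordK; last by rewrite -addnn; lia.
have [-> ->] : (n + i < n)%N = false /\ (n + i < n.*2)%N.
  by rewrite -addnn; split; lia.
by rewrite addKn.
Qed.

Lemma hco_diag_jmap_top c X : hco (diag_jmap c X) n.*2 = 0.
Proof. by rewrite /hco mxE inordK // !ifF //; rewrite -addnn; lia. Qed.

Hypothesis g_neq0 : forall k, g k != 0.

Lemma is_jmap_diag_jmap Z : in_center br Z ->
  is_jmap ip br Z (diag_jmap (g_top * hco Z n.*2)).
Proof.
move=> hZ; split=> [X _ Z' hZ' | X Y _ _].
  by rewrite diag_ip_center_r // hco_diag_jmap_top mulr0 mul0r.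
rewrite /heis_br diag_ipZr diag_ip_hbasr diag_ip_split hco_diag_jmap_top.
rewrite mulr0 mul0r addr0 mulr_suml; apply: eq_bigr => i _; have hi := ltn_ord i.
by rewrite hco_diag_jmap_lo // hco_diag_jmap_hi //; field; rewrite !g_neq0.
Qed.

Lemma diag_jmapK Z X :
  (forall i : 'I_n, g_top = g (inord i) * g (inord (n + i))) ->
  in_center br Z -> in_Vcompl ip br X ->
  diag_jmap (g_top * hco Z n.*2) (diag_jmap (g_top * hco Z n.*2) X)
  = - ip Z Z *: X.
Proof.
move=> g_rel hZ hX; rewrite diag_ip_center_r //; apply: hvecP => [i hi|].
  rewrite !hcoZ hco_diag_jmap_lo // hco_diag_jmap_hi //.
  rewrite hco_diag_jmap_hi // hco_diag_jmap_lo //.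
  by rewrite (g_rel (Ordinal hi)) /=; split; field; rewrite !g_neq0.
by rewrite hcoZ hco_diag_jmap_top (in_Vcompl_hco_top _ (g_neq0 _) hX) mulr0.
Qed.

Lemma heisenberg_type_diag_ip :
  (forall i : 'I_n, g_top = g (inord i) * g (inord (n + i))) ->
  heisenberg_type ip br.
Proof.
move=> g_rel Z hZ; exists (diag_jmap (g_top * hco Z n.*2)).
by split; [exact: is_jmap_diag_jmap | move=> X; exact: diag_jmapK].
Qed.

Lemma heisenberg_type_diag_ipP : heisenberg_type ip br <->
  forall i : 'I_n, g_top = g (inord i) * g (inord (n + i)).
Proof.
split; last exact: heisenberg_type_diag_ip.
by move=> HT i; apply: diag_ip_heisenberg_type_rel.
Qed.

End DiagonalMetric.

Section RicciBourguignon.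
Context {R : realType} {n : nat} {rho : R} {g0 : 'I_(hdim n) -> R}.
Hypotheses (n_gt0 : (0 < n)%N) (rb_denom_neq0 : n%:R + 2 - n%:R * rho != 0)
  (g0_gt0 : forall k, 0 < g0 k).
Local Notation b := (rb_b n rho g0).
Local Notation g := (rb_sol n rho g0).

Lemma rb_b_neq0 : b != 0.
Proof. by rewrite /rb_b !mulf_neq0 ?invr_neq0 ?mulf_neq0 ?(gt_eqF (g0_gt0 _)). Qed.

Lemma rb_sol_gt0 t k : 0 < 1 + b * t -> 0 < g t k.
Proof.
by move=> s_gt0; rewrite /rb_sol; case: ifP => _; apply: mulr_gt0; rewrite ?g0_gt0 ?powR_gt0.
Qed.

Lemma rb_exponentD :
  let a := (1 - n%:R * rho) / (n%:R + 2 - n%:R * rho) in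
  let c := (n%:R + n%:R * rho) / (n%:R * rho - n%:R - 2) in
  a + a = c + 1.
Proof.
have denom_neq0 : n%:R * rho - n%:R - 2 != 0 :> R.
  suff -> : n%:R * rho - n%:R - 2 = - (n%:R + 2 - n%:R * rho) :> R by rewrite oppr_eq0.
  by ring.
by rewrite /=; field; rewrite rb_denom_neq0 denom_neq0.
Qed.

Lemma rb_sol_mul t : 0 < 1 + b * t ->
  g0 (inord n.*2) = g0 (inord 0) * g0 (inord n) ->
  g t (inord 0) * g t (inord n) = (1 + b * t) * g t (inord n.*2).
Proof.
move=> s_gt0 g0_rel.
have [n_lt_hdim n_lt2n n2_gt0] : [/\ (n < hdim n)%N, (n < n.*2)%N & (0 < n.*2)%N].
  by split; rewrite -addnn; lia.
rewrite /rb_sol !inordK // ltnn n_lt2n n2_gt0 g0_rel.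
set s := 1 + b * t; set a := _ / (n%:R + 2 - _); set c := _ / (_ - _ - 2).
have s_neq0 : s != 0 by rewrite gt_eqF.
have sa2 : s `^ a * s `^ a = s * s `^ c.
  rewrite -powRD ?s_neq0 ?implybT // rb_exponentD.
  by rewrite powRD ?s_neq0 ?implybT // powRr1 ?ltW // mulrC.
by rewrite mulrACA sa2; ring.
Qed.

Lemma rb_sol_not_rel t : t != 0 -> 0 < 1 + b * t ->
  g0 (inord n.*2) = g0 (inord 0) * g0 (inord n) ->
  g t (inord n.*2) != g t (inord 0) * g t (inord n).
Proof.
move=> t_neq0 s_gt0 g0_rel; rewrite rb_sol_mul //; apply/eqP => e.
have g_neq0 : g t (inord n.*2) != 0 by rewrite gt_eqF ?rb_sol_gt0.
have : 1 + b * t = 1 by apply: (mulIf g_neq0); rewrite mul1r -e.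
by move/eqP; rewrite -subr_eq0 addrC addKr mulf_eq0 (negbTE rb_b_neq0) (negbTE t_neq0).
Qed.

End RicciBourguignon.

Theorem proposition2p5 (R : realType) (n : nat) (rho : R)
  (g0 : 'I_(hdim n) -> R) :
  (0 < n)%N ->
  n%:R + 2 - n%:R * rho != 0 ->
  (forall k, 0 < g0 k) ->
  (forall i : 'I_n, g0 (inord n.*2) = g0 (inord i) * g0 (inord (n + i))) ->
  heisenberg_type (diag_ip n g0) (heis_br n) /\
  (forall t : R, t != 0 -> 0 < 1 + rb_b n rho g0 * t ->
     ~ heisenberg_type (diag_ip n (rb_sol n rho g0 t)) (heis_br n)).
Proof.
move=> n_gt0 denom_neq0 g0_gt0 g0_rel.
split; first by apply/heisenberg_type_diag_ipP => // k; rewrite gt_eqF.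
move=> t t_neq0 s_gt0.
have g_neq0 k : rb_sol n rho g0 t k != 0 by rewrite gt_eqF ?rb_sol_gt0.
move/(heisenberg_type_diag_ipP g_neq0)/(_ (Ordinal n_gt0)); rewrite /= addn0.
have := g0_rel (Ordinal n_gt0); rewrite /= addn0 => g0_rel0.
by apply/eqP; apply: rb_sol_not_rel.
Qed.
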